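(* Let $\langle B,\wedge,{}'\rangle$ be an algebra with $\wedge$ binary and ${}'$ unary satisfying $x\wedge y\approx y\wedge x$, $x\wedge(y\wedge z)\approx(x\wedge y)\wedge z$, $x''\approx x$, and $x'\approx (x\wedge y)'\wedge(x\wedge y')'$. Then for all $x,y\in B$: $x\wedge(x\wedge y')'=y\wedge(y\wedge x')'$. *)

(* The elements [z ∧ z'] all coincide: expanding [z'] and [z] by the axiom with
   respect to [w] yields the same four factors as expanding [w'] and [w] with
   respect to [z].  Calling this element 0 and its complement 1, the axiom gives
   the bounded-semilattice laws [w ∧ 1 = w], [w ∧ w = w] and [w ∧ 0 = 0].  Then
   [t := x ∧ (x ∧ y')'] satisfies [t ∧ y' = 0], so the axiom at [(t, y)] gives
   [t = t ∧ y], and the axiom at [(x ∧ y, x ∧ y')] gives [x ∧ y = t ∧ y]; hence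
   [x ∧ (x ∧ y')' = x ∧ y], which is symmetric in [x] and [y]. *)

Set Implicit Arguments.
Unset Strict Implicit.

Section MeetComplementAlgebra.

Variables (B : Type) (meet : B -> B -> B) (c : B -> B).
Hypothesis comm : forall x y, meet x y = meet y x.
Hypothesis assoc : forall x y z, meet x (meet y z) = meet (meet x y) z.
Hypothesis invol : forall x, c (c x) = x.
Hypothesis ax : forall x y, c x = meet (c (meet x y)) (c (meet x (c y))).

Lemma compl_inj x y : c x = c y -> x = y.
Proof. intro H. rewrite <- (invol x), H. apply invol. Qed.

Lemma meet_left_comm x y z : meet x (meet y z) = meet y (meet x z).
Proof. rewrite assoc, (comm x y), <- assoc. reflexivity. Qed.

Lemma meet_swap_ends a b d e :
  meet (meet a b) (meet d e) = meet (meet e b) (meet d a).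
Proof.
  rewrite <- !assoc, (meet_left_comm a b), (meet_left_comm a d),
    (meet_left_comm e b), (meet_left_comm e d), (comm a e).
  reflexivity.
Qed.

Lemma meet_compl_const z w : meet z (c z) = meet w (c w).
Proof.
  assert (expand : forall u v, meet u (c u) =
    meet (meet (c (meet (c u) v)) (c (meet (c u) (c v))))
         (meet (c (meet u v)) (c (meet u (c v))))).
  { intros u v. rewrite <- (ax u v), <- (ax (c u) v), invol. reflexivity. }
  rewrite (expand z w), (expand w z).
  rewrite (comm (c w) z), (comm (c w) (c z)), (comm w z), (comm w (c z)).
  apply meet_swap_ends.
Qed.

Section Bottom.

Variable zero : B.
Hypothesis meet_compl : forall z, meet z (c z) = zero.

Lemma meet1x0 : meet (c zero) zero = zero.
Proof. rewrite comm. apply meet_compl. Qed.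

Lemma meet11 : meet (c zero) (c zero) = c zero.
Proof.
  set (e := meet (c zero) (c zero)).
  assert (zero_eq : zero = meet (c e) (c zero)).
  { pose proof (ax (c zero) (c zero)) as H.
    rewrite invol, meet1x0 in H. exact H. }
  assert (e_eq : e = meet (c zero) (c (meet (c e) zero))).
  { pose proof (ax (c e) (c zero)) as H.
    rewrite !invol, <- zero_eq in H. exact H. }
  assert (meet0e : meet zero e = zero).
  { unfold e. rewrite assoc, (comm zero), meet1x0, comm. apply meet1x0. }
  assert (one_eq : c zero = meet (c (meet zero (c e))) (c zero)).
  { pose proof (ax zero (c e)) as H.
    rewrite invol, meet0e in H. exact H. }
  rewrite e_eq, (comm (c e)), comm. symmetry. exact one_eq.
Qed.

Lemma meetx1 w : meet w (c zero) = w.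
Proof.
  apply compl_inj.
  rewrite (ax (meet w (c zero)) (c zero)), invol, <- !assoc, meet11, meet1x0.
  rewrite (ax w (c zero)), invol.
  reflexivity.
Qed.

Lemma meetxx w : meet w w = w.
Proof.
  apply compl_inj.
  pose proof (ax w w) as H.
  rewrite meet_compl, meetx1 in H. symmetry. exact H.
Qed.

Lemma meetx0 w : meet w zero = zero.
Proof. rewrite <- (meet_compl w), assoc, meetxx. reflexivity. Qed.

End Bottom.

Lemma meet_cmeet_c x y : meet x (c (meet x (c y))) = meet x y.
Proof.
  set (zero := meet x (c x)).
  assert (meet_compl : forall z, meet z (c z) = zero).
  { intro z. apply meet_compl_const. }
  set (t := meet x (c (meet x (c y)))).
  assert (t_eq : t = meet t y).
  { apply compl_inj.
    rewrite (ax t y).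
    replace (meet t (c y)) with zero.
    - apply meetx1, meet_compl.
    - unfold t. rewrite <- assoc, (comm _ (c y)), assoc. symmetry. apply meet_compl. }
  assert (meet_eq : meet x y = meet t y).
  { apply compl_inj.
    rewrite (ax (meet x y) (meet x (c y))).
    replace (meet (meet x y) (meet x (c y))) with zero.
    - rewrite comm, (meetx1 meet_compl).
      unfold t. rewrite <- !assoc, (comm y). reflexivity.
    - rewrite <- !assoc, (assoc y), (comm y), <- (assoc x y), meet_compl,
        assoc, (meetxx meet_compl).
      symmetry. apply (meetx0 meet_compl). }
  rewrite meet_eq. exact t_eq.
Qed.

End MeetComplementAlgebra.

Theorem lemma2p3 (B : Type) (meet : B -> B -> B) (c : B -> B)
  (comm : forall x y, meet x y = meet y x)
  (assoc : forall x y z, meet x (meet y z) = meet (meet x y) z)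
  (invol : forall x, c (c x) = x)
  (ax : forall x y, c x = meet (c (meet x y)) (c (meet x (c y)))) :
  forall x y : B, meet x (c (meet x (c y))) = meet y (c (meet y (c x))).
Proof.
  intros x y.
  rewrite !(meet_cmeet_c comm assoc invol ax).
  apply comm.
Qed.
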